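(* For integers $m,l\ge0$ let $B_{ml}=ML^{m+1}\hat L^{-l}+(-1)^{l+m}\hat L^{-l}L^mML$ and $\hat B_{ml}=L^m\hat L^{-l+1}\hat M+(-1)^{l+m}\hat L\hat M\hat L^{-l}L^m$. Then $$B_{ml}^*=-DB_{ml}D^{-1},\qquad \hat B_{ml}^*=-D\hat B_{ml}D^{-1}.$$
   Context: $D=d/dx$; pseudo-differential operators multiply via $D^i f=\sum_{r\ge0}\binom{i}{r}D^r(f)D^{i-r}$; for $A=\sum_if_iD^i$, $A^*=\sum_i(-D)^if_i$. Two-component BKP hierarchy: dressing operators $\Phi=1+\sum_{i\ge1}a_iD^{-i}$, $\hat\Phi=1+\sum_{i\ge1}b_iD^i$ depending on $t=(t_1,t_3,\dots)$, $\hat t=(\hat t_1,\hat t_3,\dots)$, $t_1=x$, with $\Phi^*=D\Phi^{-1}D^{-1}$, $\hat\Phi^*=D\hat\Phi^{-1}D^{-1}$; Lax operators $L=\Phi D\Phi^{-1}$, $\hat L=\hat\Phi D^{-1}\hat\Phi^{-1}$ (so $L^*=-DLD^{-1}$, $\hat L^*=-D\hat LD^{-1}$); Orlov–Schulman operators $M=\Phi\Gamma\Phi^{-1}$, $\hat M=\hat\Phi\hat\Gamma\hat\Phi^{-1}$ with $\Gamma=\sum_{k\ \mathrm{odd}}kt_kD^{k-1}$, $\hat\Gamma=x+\sum_{k\ \mathrm{odd}}k\hat t_kD^{-k-1}$. *)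

(* Abstract algebra of (two-sided, formal) pseudo-differential
   operators in which all products used by the paper are defined. *)
From HB Require Import structures.
From mathcomp Require Import all_boot all_order all_algebra.
Set Implicit Arguments. Unset Strict Implicit. Unset Printing Implicit Defensive.
Import Order.TTheory GRing.Theory Num.Theory.
Local Open Scope ring_scope.

(* A setting for pseudo-differential operators:
   - [coef] : commutative ring of coefficient functions, with d/dx = [fderiv];
   - [op]   : associative algebra of operators, functions embedded by [fn];
   - [Dx]   : the invertible operator D, with D f = f D + f';
   - [oadj]  : the formal adjoint A |-> A^*, an additive anti-involution with
              f^* = f and D^* = -D  (so (f D^i)^* = (-D)^i f);
   - [osum] : formal infinite sums sum_i F i of operators, with which the
              adjoint commutes (the adjoint is defined termwise). *)
Record psido_setting := PsiDO {
  coef : comNzRingType;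
  fderiv : coef -> coef;
  deriv_add : forall f g, fderiv (f + g) = fderiv f + fderiv g;
  deriv_mul : forall f g, fderiv (f * g) = fderiv f * g + f * fderiv g;
  op : unitRingType;
  fn : {rmorphism coef -> op};
  Dx : op;
  Dx_unit : Dx \is a GRing.unit;
  Dx_fn : forall f, Dx * fn f = fn f * Dx + fn (fderiv f);
  oadj : op -> op;
  adjD : forall a b, oadj (a + b) = oadj a + oadj b;
  adjM : forall a b, oadj (a * b) = oadj b * oadj a;
  adjK : involutive oadj;
  adj_fn : forall f, oadj (fn f) = fn f;
  adj_Dx : oadj Dx = - Dx;
  osum : (nat -> op) -> op;
  adj_osum : forall F, oadj (osum F) = osum (fun i => oadj (F i));
}.

Section Ops.
Variable S : psido_setting.

(* Phi = 1 + sum_{i>=1} a_i D^{-i};  (a i) stands for a_{i+1} *)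
Definition dressing (a : nat -> coef S) : op S :=
  1 + osum (fun i => fn S (a i) * (Dx S) ^- i.+1).

(* hat Phi = 1 + sum_{i>=1} b_i D^i;  (b i) stands for b_{i+1} *)
Definition hdressing (b : nat -> coef S) : op S :=
  1 + osum (fun i => fn S (b i) * (Dx S) ^+ i.+1).

(* Gamma = sum_{k odd} k t_k D^{k-1};  (t j) stands for t_{2j+1}, t 0 = x *)
Definition Gamma (t : nat -> coef S) : op S :=
  osum (fun j => fn S ((2 * j + 1)%:R * t j) * (Dx S) ^+ (2 * j)).

(* hat Gamma = x + sum_{k odd} k hat t_k D^{-k-1};  (th j) = hat t_{2j+1} *)
Definition hGamma (x : coef S) (th : nat -> coef S) : op S :=
  fn S x + osum (fun j => fn S ((2 * j + 1)%:R * th j) * (Dx S) ^- (2 * j + 2)).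

Definition LaxL (Phi : op S) : op S := Phi * Dx S * Phi^-1.
Definition LaxLh (Phih : op S) : op S := Phih * (Dx S)^-1 * Phih^-1.
Definition OSM (Phi G : op S) : op S := Phi * G * Phi^-1.

Definition Bml (L Lh M : op S) (m l : nat) : op S :=
  M * L ^+ (m + 1) * Lh ^ (- (l%:Z)) +
  (-1) ^+ (l + m) * Lh ^ (- (l%:Z)) * L ^+ m * M * L.

Definition hBml (L Lh Mh : op S) (m l : nat) : op S :=
  L ^+ m * Lh ^ (1 - l%:Z) * Mh +
  (-1) ^+ (l + m) * Lh * Mh * Lh ^ (- (l%:Z)) * L ^+ m.

End Ops.

From HB Require Import structures.
From mathcomp Require Import all_boot all_order all_algebra.
From Stdlib Require Import FunctionalExtensionality.
Set Implicit Arguments. Unset Strict Implicit. Unset Printing Implicit Defensive.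
Import Order.TTheory GRing.Theory Num.Theory.
Local Open Scope ring_scope.

(* The condition A^* = -D A D^{-1} says that A is skew for the twisted
   adjoint tadj A := D^{-1} A^* D, which is again an anti-involution.  The
   dressing constraints make tadj Phi = Phi^{-1}, so tadj commutes with
   conjugation by Phi; as tadj D = -D and Gamma is self-adjoint, L and M L
   (and likewise hat L and hat L hat M) are skew.  With Y = L^m hat L^{-l}
   one has B_{ml} = X Y - tadj (X Y) for X = M L, and
   hat B_{ml} = Y X - tadj (Y X) for X = hat L hat M: both are skew parts. *)

Lemma mul_conj (R : unitRingType) (P X Y : R) : P \is a GRing.unit ->
  (P * X * P^-1) * (P * Y * P^-1) = P * (X * Y) * P^-1.
Proof. by move=> uP; rewrite !mulrA divrK. Qed.

Section FormalAdjoint.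
Variable S : psido_setting.
Local Notation D := (Dx S).
Local Notation adj := (@oadj S).

Lemma adj1 : adj 1 = 1.
Proof. by rewrite -(rmorph1 (fn S)) adj_fn. Qed.

Lemma adjX x n : adj (x ^+ n) = adj x ^+ n.
Proof. by elim: n => [|n IHn]; rewrite ?expr0 ?adj1 // exprS adjM IHn -exprSr. Qed.

Lemma adjV x : x \is a GRing.unit -> adj x^-1 = (adj x)^-1.
Proof.
move=> ux; have adjVx : adj x^-1 * adj x = 1 by rewrite -adjM mulrV // adj1.
have adjxV : adj x * adj x^-1 = 1 by rewrite -adjM mulVr // adj1.
have uax : adj x \is a GRing.unit by apply/unitrP; exists (adj x^-1).
by rewrite -[LHS]mulr1 -(mulrV uax) mulrA adjVx mul1r.
Qed.

Lemma adj_fn_mulr f X : adj X = X -> GRing.comm X (fn S f) ->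
  adj (fn S f * X) = fn S f * X.
Proof. by move=> selfX cXf; rewrite adjM adj_fn selfX cXf. Qed.

Lemma adj_Dx_even n : adj (D ^+ (2 * n)) = D ^+ (2 * n).
Proof. by rewrite adjX adj_Dx !exprM sqrrN. Qed.

Lemma adj_Dx_evenV n : adj (D ^- (2 * n)) = D ^- (2 * n).
Proof. by rewrite adjV ?adj_Dx_even // unitrX // Dx_unit. Qed.

Lemma deriv0 : fderiv (0 : coef S) = 0.
Proof. by apply/(@addrI _ (fderiv 0)); rewrite -deriv_add !addr0. Qed.

Lemma deriv1 : fderiv (1 : coef S) = 0.
Proof.
have := deriv_mul (1 : coef S) 1; rewrite !mul1r mulr1 => d11.
by apply/(@addrI _ (@fderiv S 1)); rewrite -d11 addr0.
Qed.

Lemma deriv_natr n : fderiv (n%:R : coef S) = 0.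
Proof. by elim: n => [|n IHn]; rewrite ?deriv0 // mulrS deriv_add deriv1 IHn addr0. Qed.

Lemma deriv_natrM n (f : coef S) : fderiv f = 0 -> fderiv (n%:R * f) = 0.
Proof. by move=> df; rewrite deriv_mul deriv_natr df mul0r mulr0 addr0. Qed.

Lemma comm_Dx_const (f : coef S) : fderiv f = 0 -> GRing.comm D (fn S f).
Proof. by move=> df; rewrite /GRing.comm Dx_fn df rmorph0 addr0. Qed.

Lemma adj_Gamma t : (forall j, fderiv (t j.+1) = 0) -> adj (Gamma t) = Gamma t.
Proof.
move=> dt; rewrite /Gamma adj_osum; congr osum; apply: functional_extensionality.
case=> [|j]; apply: adj_fn_mulr; rewrite ?adj_Dx_even //.
  (* t 0 = x is not constant, but it multiplies D^0 *)
  by rewrite muln0 expr0; apply/commr_sym/commr1.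
exact/commr_sym/commrX/commr_sym/comm_Dx_const/deriv_natrM.
Qed.

Lemma adj_hGamma x th : (forall j, fderiv (th j) = 0) ->
  adj (hGamma x th) = hGamma x th.
Proof.
move=> dth; rewrite /hGamma adjD adj_fn adj_osum; congr (_ + osum _).
apply: functional_extensionality => j.
rewrite -[(2 * j + 2)%N]mulnSr; apply: adj_fn_mulr; first exact: adj_Dx_evenV.
exact/commr_sym/commrV/commrX/commr_sym/comm_Dx_const/deriv_natrM.
Qed.

End FormalAdjoint.

Section TwistedAdjoint.
Variable S : psido_setting.
Local Notation D := (Dx S).
Local Notation adj := (@oadj S).

Definition tadj (A : op S) : op S := D^-1 * adj A * D.

Lemma adj_tadj A : adj A = D * tadj A * D^-1.
Proof. by rewrite /tadj !mulrA mulrV ?Dx_unit // mul1r mulrK // Dx_unit. Qed.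

Lemma adj_skew A : tadj A = - A -> adj A = - (D * A * D^-1).
Proof. by move=> skewA; rewrite adj_tadj skewA mulrN mulNr. Qed.

Lemma tadjD A B : tadj (A + B) = tadj A + tadj B.
Proof. by rewrite /tadj adjD mulrDr mulrDl. Qed.

Lemma tadjM A B : tadj (A * B) = tadj B * tadj A.
Proof. by rewrite /tadj adjM !mulrA mulrK // Dx_unit. Qed.

Lemma tadj1 : tadj 1 = 1.
Proof. by rewrite /tadj adj1 mulr1 mulVr // Dx_unit. Qed.

Lemma tadj_Dx : tadj D = - D.
Proof. by rewrite /tadj adj_Dx mulrN mulNr mulVr ?Dx_unit // mul1r. Qed.

Lemma tadjV A : A \is a GRing.unit -> tadj A^-1 = (tadj A)^-1.
Proof.
move=> uA; have tAV : tadj A * tadj A^-1 = 1 by rewrite -tadjM mulVr // tadj1.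
have tVA : tadj A^-1 * tadj A = 1 by rewrite -tadjM mulrV // tadj1.
have utA : tadj A \is a GRing.unit by apply/unitrP; exists (tadj A^-1).
by rewrite -[LHS]mulr1 -(mulrV utA) mulrA tVA mul1r.
Qed.

Lemma tadj_DxV : tadj D^-1 = - D^-1.
Proof. by rewrite tadjV ?Dx_unit // tadj_Dx invrN. Qed.

Lemma tadjK : involutive tadj.
Proof.
move=> A; rewrite [tadj A]/tadj !tadjM tadj_DxV tadj_Dx /tadj adjK.
by rewrite !mulrN !mulNr opprK !mulrA mulrV ?Dx_unit // mul1r mulrK // Dx_unit.
Qed.

Lemma tadjX A n : tadj (A ^+ n) = tadj A ^+ n.
Proof. by elim: n => [|n IHn]; rewrite ?expr0 ?tadj1 // exprS tadjM IHn -exprSr. Qed.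

Lemma tadjX_skew A n : tadj A = - A -> tadj (A ^+ n) = (-1) ^+ n * A ^+ n.
Proof. by move=> skewA; rewrite tadjX skewA; apply: exprNn. Qed.

Lemma tadjV_skew A : A \is a GRing.unit -> tadj A = - A -> tadj A^-1 = - A^-1.
Proof. by move=> uA skewA; rewrite tadjV // skewA invrN. Qed.

Lemma tadj_skew_monomial A B m l : tadj A = - A -> B \is a GRing.unit ->
  tadj B = - B ->
  tadj (A ^+ m * B ^ (- l%:Z)) = (-1) ^+ (l + m) * (B ^ (- l%:Z) * A ^+ m).
Proof.
move=> skewA uB skewB; rewrite -exprz_inv tadjM !tadjX_skew ?tadjV_skew //.
by rewrite exprD -!mulrA; congr (_ * _); rewrite mulrA (commr_sign _ m) -mulrA.
Qed.

Lemma tadj_mulDx X : tadj (X * D) = - (adj X * D).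
Proof. by rewrite tadjM tadj_Dx /tadj mulNr !mulrA mulrV ?Dx_unit // mul1r. Qed.

Lemma tadj_DxVmul X : tadj (D^-1 * X) = - (D^-1 * adj X).
Proof. by rewrite tadjM tadj_DxV /tadj mulrN -!mulrA divrr ?Dx_unit // mulr1. Qed.

Lemma tadj_dressing P : P \is a GRing.unit ->
  adj P = D * P^-1 * D^-1 -> tadj P = P^-1.
Proof.
move=> uP adjP; rewrite /tadj adjP !mulrA mulVr ?Dx_unit // mul1r.
by rewrite divrK // Dx_unit.
Qed.

Lemma tadj_conj P X : P \is a GRing.unit -> tadj P = P^-1 ->
  tadj (P * X * P^-1) = P * tadj X * P^-1.
Proof. by move=> uP tP; rewrite !tadjM tadjV // tP invrK mulrA. Qed.

Lemma tadj_skew_mull X Y : tadj X = - X ->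
  tadj (X * Y + tadj Y * X) = - (X * Y + tadj Y * X).
Proof. by move=> skewX; rewrite tadjD 2!tadjM tadjK skewX mulrN mulNr opprD addrC. Qed.

Lemma tadj_skew_mulr X Y : tadj X = - X ->
  tadj (Y * X + X * tadj Y) = - (Y * X + X * tadj Y).
Proof. by move=> skewX; rewrite tadjD 2!tadjM tadjK skewX mulrN mulNr opprD addrC. Qed.

End TwistedAdjoint.

Theorem proposition3p9 (S : psido_setting)
    (t th : nat -> coef S) (a b : nat -> coef S)
    (hx : fderiv (t 0%N) = 1)
    (ht : forall j, fderiv (t j.+1) = 0)
    (hth : forall j, fderiv (th j) = 0)
    (hPhi : dressing a \is a GRing.unit)
    (hPhih : hdressing b \is a GRing.unit)
    (hPhi_adj : oadj (dressing a) = Dx S * (dressing a)^-1 * (Dx S)^-1)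
    (hPhih_adj : oadj (hdressing b) = Dx S * (hdressing b)^-1 * (Dx S)^-1) :
  let L := LaxL (dressing a) in
  let Lh := LaxLh (hdressing b) in
  let M := OSM (dressing a) (Gamma t) in
  let Mh := OSM (hdressing b) (hGamma (t 0%N) th) in
  forall m l : nat,
    oadj (Bml L Lh M m l) = - (Dx S * Bml L Lh M m l * (Dx S)^-1) /\
    oadj (hBml L Lh Mh m l) = - (Dx S * hBml L Lh Mh m l * (Dx S)^-1).
Proof.
move=> L Lh M Mh m l.
have tPhi := tadj_dressing hPhi hPhi_adj.
have tPhih := tadj_dressing hPhih hPhih_adj.
have skewL : tadj L = - L by rewrite tadj_conj // tadj_Dx mulrN mulNr.
have skewLh : tadj Lh = - Lh by rewrite tadj_conj // tadj_DxV mulrN mulNr.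
have uLh : Lh \is a GRing.unit by rewrite !unitrMl ?unitrV ?Dx_unit.
have skewML : tadj (M * L) = - (M * L).
  by rewrite mul_conj // tadj_conj // tadj_mulDx adj_Gamma // mulrN mulNr.
have skewLhMh : tadj (Lh * Mh) = - (Lh * Mh).
  by rewrite mul_conj // tadj_conj // tadj_DxVmul adj_hGamma // mulrN mulNr.
clearbody L Lh M Mh.
have tY := tadj_skew_monomial m l skewL uLh skewLh.
split; apply: adj_skew.
  have -> : Bml L Lh M m l = M * L * (L ^+ m * Lh ^ (- l%:Z)) +
      tadj (L ^+ m * Lh ^ (- l%:Z)) * (M * L).
    by rewrite tY /Bml addn1 exprS !mulrA.
  exact: tadj_skew_mull.
have -> : hBml L Lh Mh m l = L ^+ m * Lh ^ (- l%:Z) * (Lh * Mh) +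
    Lh * Mh * tadj (L ^+ m * Lh ^ (- l%:Z)).
  rewrite tY /hBml [1 - _]addrC exprzDr // expr1z !mulrA.
  by rewrite (commr_sign (Lh * Mh)) !mulrA.
exact: tadj_skew_mulr.
Qed.
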